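(* Assume: the vectors $\pi(t)\in\mathbb R^m$ have nonnegative entries summing to $1$ and satisfy (i) $\pi(t)^\top=\pi(t+1)^\top A(t)$ for all $t$, (ii) $|[A(s:t)]_{ij}-\pi_j(t)|\le B\lambda^{s-t}$ for all $i,j$, $s\ge t\ge0$, with $B>0$, $\lambda\in(0,1)$, and (iii) $\pi_i(t)\ge\eta$ for all $i,t$ for some $\eta>0$; there is $R\ge1$ with $\mathrm{dist}(x,\Omega)\le R\max_{i}\mathrm{dist}(x,\Omega_i)$ for all $x\in U=\mathrm{conv}(\bigcup_i\Omega_i)$; $\theta_i(0)\in\Omega_i$ for all $i$; and $\{\alpha(t)\}$ is nonincreasing. Let $\theta_i(t)$ be the DPG iterates, $\bar\theta(t)=\sum_j\pi_j(t)\theta_j(t)$, $w(t)=P_\Omega[\bar\theta(t)]$, $\beta(t)=\sum_i\|\phi_i(t)\|$, $\psi(t)=\alpha(t)\sum_{r=0}^{t-1}\lambda^{t-r-1}\beta(r)$, and define $D_1=B\sum_j\|\theta_j(0)\|$, $D_2=mBC$, $D_3=2C(1+R/\eta)$, $D_4=\eta/2$, $b=\sqrt{\eta/m}$, $a=\frac{D_3B}{(1-\lambda)b}$, $D_5=C^2+a^2/2$, $D_{13}=D_1D_3$, $D_{23}=D_2D_3$. Then for every $v\in\Omega$ and every $t\ge0$, $$\sum_{i=1}^m\pi_i(t+1)\|\theta_i(t+1)-v\|^2+ab\,\psi(t+1)\le\sum_{i=1}^m\pi_i(t)\|\theta_i(t)-v\|^2+ab\,\psi(t)-2\alpha(t)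c^\top(w(t)-v)+D_5\alpha^2(t)-D_4\sum_{i=1}^m\|\phi_i(t)\|^2+D_{13}\alpha(t)\lambda^t+D_{23}\alpha(t)\sum_{r=0}^{t-1}\lambda^{t-r-1}\alpha(r).$$
   Context: Agents $\mathcal V=\{1,\dots,m\}$. $A(t)=[a_{ij}(t)]\in\mathbb R^{m\times m}$, $t\in\mathbb Z_{\ge0}$, are row-stochastic matrices with nonnegative entries; for $s\ge t$, $A(s:t)=A(s-1)\cdots A(t)$, $A(t:t)=I$. $\Omega_1,\dots,\Omega_m\subseteq\mathbb R^p$ are nonempty closed convex sets with $\Omega=\bigcap_i\Omega_i\ne\emptyset$; $c\in\mathbb R^p$, $C=\|c\|$; $\alpha(t)>0$ are stepsizes. $P_K$ denotes Euclidean projection onto a closed convex set $K$ and $\mathrm{dist}(x,K)=\inf_{z\in K}\|x-z\|$. DPG iteration: $\theta_i(t+1)=P_{\Omega_i}\big[\sum_j a_{ij}(t)\theta_j(t)-\alpha(t)c\big]$, and $\phi_i(t)=\theta_i(t+1)-\big[\sum_j a_{ij}(t)\theta_j(t)-\alpha(t)c\big]$. *)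

From HB Require Import structures.
From mathcomp Require Import all_boot all_order all_algebra.
From mathcomp Require Import all_classical all_reals all_analysis.
Import numFieldNormedType.Exports.
Set Implicit Arguments. Unset Strict Implicit. Unset Printing Implicit Defensive.
Import Order.TTheory GRing.Theory Num.Theory.
Local Open Scope classical_set_scope.
Local Open Scope ring_scope.

Section Defs.
Variable R : realType.

Definition dotp (p : nat) (u v : 'rV[R]_p) : R := \sum_(k < p) u ord0 k * v ord0 k.
Definition enorm (p : nat) (u : 'rV[R]_p) : R := Num.sqrt (dotp u u).

Definition dist_to (p : nat) (x : 'rV[R]_p) (K : set 'rV[R]_p) : R :=
  inf [set enorm (x - z) | z in K].

Definition is_proj (p : nat) (K : set 'rV[R]_p) (y x : 'rV[R]_p) : Prop :=
  K x /\ forall z, K z -> enorm (y - x) <= enorm (y - z).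

Definition conv_hull (p : nat) (S : set 'rV[R]_p) : set 'rV[R]_p :=
  [set x | exists (n : nat) (w : 'I_n -> R) (z : 'I_n -> 'rV[R]_p),
     (forall k, 0 <= w k) /\ \sum_(k < n) w k = 1 /\ (forall k, S (z k)) /\
     x = \sum_(k < n) w k *: z k].

Definition row_stochastic (m : nat) (M : 'M[R]_m) : Prop :=
  (forall i j, 0 <= M i j) /\ (forall i, \sum_(j < m) M i j = 1).

(* Aprod A t k = A(t+k-1) ... A(t); so A(s:t) = Aprod A t (s - t), A(t:t) = I *)
Fixpoint Aprod (m : nat) (A : nat -> 'M[R]_m) (t k : nat) : 'M[R]_m :=
  match k with
  | 0 => 1%:M
  | k'.+1 => A (t + k')%N *m Aprod A t k'
  end.

Definition Atrans (m : nat) (A : nat -> 'M[R]_m) (s t : nat) : 'M[R]_m :=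
  Aprod A t (s - t).

End Defs.

(* Averaging the projection inequality
     |theta_i(t+1) - v|^2 <= |sum_j a_ij theta_j - alpha c - v|^2 - |phi_i|^2
   with the weights pi(t+1) and using pi(t)^T = pi(t+1)^T A(t) turns the consensus step
   into the pi(t)-weighted distance to v, up to the cross term -2 alpha c^T (thetabar - v),
   and pi >= eta leaves -eta sum_i |phi_i|^2.  Replacing thetabar by w = P_Omega thetabar
   costs 2 alpha C |thetabar - w| <= 2 alpha C R max_i dist(thetabar, Omega_i), and
   unrolling the iteration as a perturbed linear recursion, the mixing bound (ii) gives
     |theta_i - thetabar| <= B lam^t sum_j |theta_j(0)| + B sum_r lam^(t-r-1) (beta r + m alpha r C).
   The beta-part of this error is absorbed by the discounted potential ab psi, because
   psi(t+1) <= alpha(t) (lam sum_r lam^(t-r-1) beta r + beta t); the remaining ab alpha beta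
   is split by AM-GM against half of eta sum_i |phi_i|^2. *)

From HB Require Import structures.
From mathcomp Require Import all_boot all_order all_algebra.
From mathcomp Require Import all_classical all_reals all_analysis.
From mathcomp Require Import ring lra.
Import numFieldNormedType.Exports.
Import Order.TTheory GRing.Theory Num.Theory.
Local Open Scope classical_set_scope.
Local Open Scope ring_scope.
Set Implicit Arguments. Unset Strict Implicit.

Lemma sqr_le_mul_of_quadratic_ge0 (R : realFieldType) (a b d : R) : 0 <= b ->
  (forall s, 0 <= a - 2 * s * d + s ^+ 2 * b) -> d ^+ 2 <= a * b.
Proof.
move=> b_ge0 quad_ge0; have [b0|b_neq0] := eqVneq b 0.
  have [->|d_neq0] := eqVneq d 0; first by rewrite b0 expr0n mulr0.
  have := quad_ge0 ((a + 1) / (2 * d)); rewrite b0 !mulr0 addr0.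
  have -> : 2 * ((a + 1) / (2 * d)) * d = a + 1 by field.
  lra.
have b_gt0 : 0 < b by rewrite lt_neqAle eq_sym b_neq0.
have := quad_ge0 (d / b).
have -> : a - 2 * (d / b) * d + (d / b) ^+ 2 * b = a - d ^+ 2 / b by field.
by rewrite subr_ge0 ler_pdivrMr.
Qed.

Lemma jensen_sqr (R : realFieldType) n (a x : 'I_n -> R) :
  (forall j, 0 <= a j) -> \sum_j a j = 1 ->
  (\sum_j a j * x j) ^+ 2 <= \sum_j a j * x j ^+ 2.
Proof.
move=> a_ge0 a_sum1; set M := \sum_j a j * x j.
have : 0 <= \sum_j a j * (x j - M) ^+ 2.
  by apply: sumr_ge0 => j _; rewrite mulr_ge0 ?sqr_ge0.
rewrite (eq_bigr (fun j => a j * x j ^+ 2 - 2 * M * (a j * x j) + M ^+ 2 * a j));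
  last by move=> j _; ring.
rewrite big_split sumrB /= -!mulr_sumr -/M a_sum1; lra.
Qed.

Lemma sqr_sum_le (R : realFieldType) n (x : 'I_n -> R) :
  (\sum_j x j) ^+ 2 <= n%:R * \sum_j x j ^+ 2.
Proof.
case: n x => [|n] x; first by rewrite !big_ord0 expr0n mul0r.
set N : R := n.+1%:R; have N_gt0 : 0 < N by rewrite ltr0n.
have Ninv_gt0 : 0 < N^-1 by rewrite invr_gt0.
have := @jensen_sqr _ n.+1 (fun=> N^-1) x (fun=> ltW Ninv_gt0) _.
rewrite sumr_const card_ord -mulr_natr mulVf ?gt_eqF // => /(_ erefl).
rewrite -!mulr_sumr => jensen.
have -> : (\sum_j x j) ^+ 2 = N ^+ 2 * (N^-1 * \sum_j x j) ^+ 2 by field; rewrite gt_eqF.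
apply: le_trans (ler_wpM2l (sqr_ge0 N) jensen) _.
by rewrite mulrA expr2 mulfK ?gt_eqF.
Qed.

Section Euclidean.
Variables (R : realType) (p : nat).
Implicit Types u v x : 'rV[R]_p.

Lemma dotpC u v : dotp u v = dotp v u.
Proof. by apply: eq_bigr => k _; rewrite mulrC. Qed.

Lemma dotpDr u v x : dotp u (v + x) = dotp u v + dotp u x.
Proof. by rewrite /dotp -big_split; apply: eq_bigr => k _; rewrite mxE mulrDr. Qed.

Lemma dotpZr u v (s : R) : dotp u (s *: v) = s * dotp u v.
Proof. by rewrite /dotp mulr_sumr; apply: eq_bigr => k _; rewrite mxE mulrCA. Qed.

Lemma dotpNr u v : dotp u (- v) = - dotp u v.
Proof. by rewrite -scaleN1r dotpZr mulN1r. Qed.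

Lemma dotpBr u v x : dotp u (v - x) = dotp u v - dotp u x.
Proof. by rewrite dotpDr dotpNr. Qed.

Lemma dotpDl u v x : dotp (v + x) u = dotp v u + dotp x u.
Proof. by rewrite dotpC dotpDr !(dotpC u). Qed.

Lemma dotpZl u v (s : R) : dotp (s *: v) u = s * dotp v u.
Proof. by rewrite dotpC dotpZr dotpC. Qed.

Lemma dotpNl u v : dotp (- v) u = - dotp v u.
Proof. by rewrite dotpC dotpNr dotpC. Qed.

Lemma dotpBl u v x : dotp (v - x) u = dotp v u - dotp x u.
Proof. by rewrite dotpDl dotpNl. Qed.

Lemma dotp_sumZr u n (s : 'I_n -> R) (y : 'I_n -> 'rV[R]_p) :
  dotp u (\sum_i s i *: y i) = \sum_i s i * dotp u (y i).
Proof.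
rewrite /dotp (eq_bigr (fun k => \sum_i s i * (u 0 k * y i 0 k))) => [|k _].
  by rewrite exchange_big; apply: eq_bigr => i _; rewrite mulr_sumr.
by rewrite summxE mulr_sumr; apply: eq_bigr => i _; rewrite mxE mulrCA.
Qed.

Lemma dotpp_ge0 u : 0 <= dotp u u.
Proof. by apply: sumr_ge0 => k _; rewrite -expr2 sqr_ge0. Qed.

Lemma enorm_ge0 u : 0 <= enorm u.
Proof. exact: sqrtr_ge0. Qed.

Lemma enorm_sq u : enorm u ^+ 2 = dotp u u.
Proof. by rewrite sqr_sqrtr // dotpp_ge0. Qed.

Lemma dotp_le_enorm u v : dotp u v <= enorm u * enorm v.
Proof.
have cauchy_schwarz : `|dotp u v| ^+ 2 <= (enorm u * enorm v) ^+ 2.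
  rewrite real_normK ?num_real // exprMn !enorm_sq.
  apply: sqr_le_mul_of_quadratic_ge0 => [|s]; first exact: dotpp_ge0.
  have := dotpp_ge0 (u - s *: v).
  rewrite !dotpBl !dotpBr !dotpZl !dotpZr (dotpC v u) => h; lra.
apply: le_trans (ler_norm _) _.
by rewrite -ler_sqr // nnegrE ?mulr_ge0 ?enorm_ge0.
Qed.

Lemma enormD_sq u v :
  enorm (u + v) ^+ 2 = enorm u ^+ 2 + 2 * dotp u v + enorm v ^+ 2.
Proof. by rewrite !enorm_sq dotpDl !dotpDr (dotpC v u); ring. Qed.

Lemma enormB_sq u v :
  enorm (u - v) ^+ 2 = enorm u ^+ 2 - 2 * dotp u v + enorm v ^+ 2.
Proof. by rewrite !enorm_sq dotpBl !dotpBr (dotpC v u); ring. Qed.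

Lemma enormD u v : enorm (u + v) <= enorm u + enorm v.
Proof.
rewrite -ler_sqr ?nnegrE ?addr_ge0 ?enorm_ge0 // enormD_sq.
have := dotp_le_enorm u v; lra.
Qed.

Lemma enormZ u (s : R) : enorm (s *: u) = `|s| * enorm u.
Proof.
by rewrite /enorm dotpZl dotpZr mulrA -expr2 sqrtrM ?sqr_ge0 // sqrtr_sqr.
Qed.

Lemma enormN u : enorm (- u) = enorm u.
Proof. by rewrite -scaleN1r enormZ normrN1 mul1r. Qed.

Lemma enormBC u v : enorm (u - v) = enorm (v - u).
Proof. by rewrite -enormN opprB. Qed.

Lemma enorm0 : enorm (0 : 'rV[R]_p) = 0.
Proof. by rewrite -(scale0r (0 : 'rV[R]_p)) enormZ normr0 mul0r. Qed.

Lemma enorm_sum_le (I : Type) (r : seq I) (P : pred I) (f : I -> 'rV[R]_p) :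
  enorm (\sum_(i <- r | P i) f i) <= \sum_(i <- r | P i) enorm (f i).
Proof.
elim/big_ind2: _ => [|x1 x2 y1 y2 le1 le2|//]; first by rewrite enorm0.
exact: le_trans (enormD _ _) (lerD le1 le2).
Qed.

Lemma enorm_convex_sqr n (a : 'I_n -> R) (y : 'I_n -> 'rV[R]_p) :
  (forall j, 0 <= a j) -> \sum_j a j = 1 ->
  enorm (\sum_j a j *: y j) ^+ 2 <= \sum_j a j * enorm (y j) ^+ 2.
Proof.
move=> a_ge0 a_sum1; apply: le_trans (jensen_sqr (fun j => enorm (y j)) a_ge0 a_sum1).
rewrite ler_sqr ?nnegrE ?enorm_ge0 ?sumr_ge0 // => [|j _]; last first.
  by rewrite mulr_ge0 ?enorm_ge0.
apply: le_trans (enorm_sum_le _ _ _) _; apply: ler_sum => j _.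
by rewrite enormZ ger0_norm.
Qed.

End Euclidean.

Section Projection.
Variables (R : realType) (p : nat) (K : set 'rV[R]_p).

Lemma dist_to_le_enorm y z : K z -> dist_to y K <= enorm (y - z).
Proof.
move=> Kz; apply: ge_inf; last by exists z.
by exists 0 => _ [u _ <-]; exact: enorm_ge0.
Qed.

Lemma is_proj_enorm_le_dist y x : is_proj K y x -> enorm (y - x) <= dist_to y K.
Proof.
move=> [Kx x_min]; apply: lb_le_inf; first by exists (enorm (y - x)), x.
by move=> _ [z Kz <-]; exact: x_min.
Qed.

Hypothesis convK : convex_set K.

Lemma is_proj_dotp_le0 y x z : is_proj K y x -> K z -> dotp (y - x) (z - x) <= 0.
Proof.
move=> [Kx x_min] Kz; set d := dotp _ _; set e := dotp (z - x) (z - x).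
have e_ge0 : 0 <= e := dotpp_ge0 _.
have segment s : 0 <= s <= 1 -> 2 * s * d <= s ^+ 2 * e.
  move=> /andP[s_ge0 s_le1].
  have Ks : K (s *: z + (1 - s) *: x).
    exact: set_mem (convK (Itv01 s_ge0 s_le1) (mem_set Kz) (mem_set Kx)).
  have : enorm (y - x) ^+ 2 <= enorm (y - (s *: z + (1 - s) *: x)) ^+ 2.
    by rewrite ler_sqr ?nnegrE ?enorm_ge0 // x_min.
  have -> : y - (s *: z + (1 - s) *: x) = (y - x) - s *: (z - x).
    by rewrite scalerBl scale1r scalerBr addrCA opprD addrA.
  rewrite (enormB_sq (y - x)) dotpZr enormZ exprMn real_normK ?num_real //.
  by rewrite (enorm_sq (z - x)) -/d -/e; lra.
(* Moving from x towards z by s = d / (d + e) would bring it strictly closer to y. *)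
rewrite leNgt; apply/negP => d_gt0.
have de_gt0 : 0 < d + e by lra.
set s := d / (d + e).
have s_def : s * (d + e) = d by rewrite divfK // gt_eqF.
have s_gt0 : 0 < s by rewrite divr_gt0.
have s_le1 : s <= 1 by rewrite ler_pdivrMr // mul1r; lra.
have := segment s; rewrite (ltW s_gt0) s_le1 => /(_ isT); nra.
Qed.

Lemma is_proj_enorm_sqr y x z : is_proj K y x -> K z ->
  enorm (x - z) ^+ 2 <= enorm (y - z) ^+ 2 - enorm (x - y) ^+ 2.
Proof.
move=> projx Kz; have := is_proj_dotp_le0 projx Kz.
have -> : y - z = (y - x) - (z - x) by rewrite opprB addrA subrK.
rewrite !enorm_sq !dotpBl !dotpBr (dotpC z x) (dotpC y x) (dotpC z y); lra.
Qed.

End Projection.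

Definition disc_sum (R : pzRingType) (lam : R) (u : nat -> R) (t : nat) : R :=
  \sum_(0 <= r < t) lam ^+ (t - r - 1) * u r.

Lemma disc_sumS (R : pzRingType) (lam : R) u t :
  disc_sum lam u t.+1 = lam * disc_sum lam u t + u t.
Proof.
rewrite /disc_sum big_nat_recr //= subSnn subnn expr0 mul1r mulr_sumr.
congr (_ + _); apply: eq_big_nat => r /andP[_ lt_rt].
by rewrite mulrA -exprS -subnDA addn1 subSS subn1 prednK // subn_gt0.
Qed.

Lemma disc_sum_ge0 (R : numDomainType) (lam : R) u t :
  0 <= lam -> (forall r, 0 <= u r) -> 0 <= disc_sum lam u t.
Proof.
by move=> lam_ge0 u_ge0; apply: sumr_ge0 => r _; rewrite mulr_ge0 ?exprn_ge0.
Qed.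

Section Consensus.
Variables (R : realType) (m p : nat) (A : nat -> 'M[R]_m).

Lemma Atransnn t : Atrans A t t = 1%:M.
Proof. by rewrite /Atrans subnn. Qed.

Lemma AtransSl s t : (s <= t)%N -> Atrans A t.+1 s = A t *m Atrans A t s.
Proof. by move=> le_st; rewrite /Atrans subSn //= subnKC. Qed.

Variables (pi : nat -> 'rV[R]_m) (X U : nat -> 'M[R]_(m, p)).
Hypothesis pi_inv : forall t, pi t = pi t.+1 *m A t.
Hypothesis X_rec : forall t, X t.+1 = A t *m X t + U t.

Lemma state_expand t :
  X t = Atrans A t 0 *m X 0%N + \sum_(0 <= r < t) Atrans A t r.+1 *m U r.
Proof.
elim: t => [|t IH]; first by rewrite big_geq // addr0 Atransnn mul1mx.
rewrite X_rec IH big_nat_recr //= Atransnn mul1mx mulmxDr mulmxA AtransSl //.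
rewrite addrA mulmx_sumr; congr (_ + _ + _); apply: eq_big_nat => r /andP[_ lt_rt].
by rewrite mulmxA AtransSl.
Qed.

Lemma pi_Atrans s t : (s <= t)%N -> pi s = pi t *m Atrans A t s.
Proof.
move=> le_st; rewrite -(subnKC le_st); elim: (t - s)%N => [|k IH].
  by rewrite addn0 Atransnn mulmx1.
by rewrite addnS AtransSl ?leq_addr // mulmxA -pi_inv.
Qed.

Lemma pi_mul_state t :
  pi t *m X t = pi 0%N *m X 0%N + \sum_(0 <= r < t) pi r.+1 *m U r.
Proof.
rewrite state_expand mulmxDr mulmxA -pi_Atrans // mulmx_sumr; congr (_ + _).
by apply: eq_big_nat => r /andP[_ lt_rt]; rewrite mulmxA -pi_Atrans.
Qed.

Lemma row_mul_subr (M : 'M[R]_m) (Y : 'M[R]_(m, p)) (q : 'rV[R]_m) i :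
  row i (M *m Y) - q *m Y = \sum_j (M i j - q 0 j) *: row j Y.
Proof.
rewrite row_mul !mulmx_sum_row -sumrB; apply: eq_bigr => j _.
by rewrite scalerBl mxE.
Qed.

Lemma state_deviation t i : row i (X t) - pi t *m X t =
  \sum_j (Atrans A t 0 i j - pi 0%N 0 j) *: row j (X 0%N) +
  \sum_(0 <= r < t) \sum_j (Atrans A t r.+1 i j - pi r.+1 0 j) *: row j (U r).
Proof.
rewrite pi_mul_state {1}state_expand raddfD opprD addrACA row_mul_subr.
by rewrite raddf_sum -sumrB; congr (_ + _); apply: eq_bigr => r _; exact: row_mul_subr.
Qed.

Variables (B lam : R).
Hypothesis mixing : forall s t i j, (t <= s)%N ->
  `|Atrans A s t i j - pi t 0 j| <= B * lam ^+ (s - t).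

Lemma state_deviation_le t i : enorm (row i (X t) - pi t *m X t) <=
  B * lam ^+ t * \sum_j enorm (row j (X 0%N)) +
  \sum_(0 <= r < t) B * lam ^+ (t - r - 1) * \sum_j enorm (row j (U r)).
Proof.
rewrite state_deviation; apply: le_trans (enormD _ _) (lerD _ _).
  apply: le_trans (enorm_sum_le _ _ _) _; rewrite mulr_sumr; apply: ler_sum => j _.
  rewrite enormZ; apply: ler_wpM2r; first exact: enorm_ge0.
  by have := mixing i j (leq0n t); rewrite subn0.
apply: le_trans (enorm_sum_le _ _ _) _; apply: ler_sum_nat => r /andP[_ lt_rt].
apply: le_trans (enorm_sum_le _ _ _) _; rewrite mulr_sumr; apply: ler_sum => j _.
rewrite enormZ; apply: ler_wpM2r; first exact: enorm_ge0.
by have := mixing i j lt_rt; rewrite subnS subn1.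
Qed.

End Consensus.

Section DPG.
Variables (R : realType) (m p : nat).
Variables (A : nat -> 'M[R]_m) (Om : 'I_m -> set 'rV[R]_p) (c : 'rV[R]_p).
Variables (alpha : nat -> R) (pi : nat -> 'rV[R]_m) (B lam eta Rb : R).
Variables (theta : nat -> 'I_m -> 'rV[R]_p) (w : nat -> 'rV[R]_p).

Local Notation Omega := [set x | forall i, Om i x].
Local Notation C := (enorm c).

Definition mix t i := \sum_(j < m) A t i j *: theta t j.
Definition avg t := \sum_(j < m) pi t ord0 j *: theta t j.
Definition phi t i := theta t.+1 i - (mix t i - alpha t *: c).
Definition beta t := \sum_(i < m) enorm (phi t i).
Definition dev_bound t := B * lam ^+ t * \sum_(j < m) enorm (theta 0%N j)
  + B * disc_sum lam beta t + m%:R * B * C * disc_sum lam alpha t.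

Hypothesis stochA : forall t, row_stochastic (A t).
Hypothesis convOm : forall i, convex_set (Om i).
Hypothesis alpha_gt0 : forall t, 0 < alpha t.
Hypothesis alpha_noninc : forall t, alpha t.+1 <= alpha t.
Hypothesis pi_ge0 : forall t j, 0 <= pi t ord0 j.
Hypothesis pi_sum1 : forall t, \sum_(j < m) pi t ord0 j = 1.
Hypothesis pi_inv : forall t, pi t = pi t.+1 *m A t.
Hypotheses (B_gt0 : 0 < B) (lam_gt0 : 0 < lam) (lam_lt1 : lam < 1).
Hypothesis mixing : forall s t i j, (t <= s)%N ->
  `|Atrans A s t i j - pi t ord0 j| <= B * lam ^+ (s - t).
Hypothesis eta_gt0 : 0 < eta.
Hypothesis pi_ge_eta : forall t i, eta <= pi t ord0 i.
Hypothesis Rb_ge0 : 0 <= Rb.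
Hypothesis regular : forall x, conv_hull (\bigcup_i Om i) x ->
  dist_to x Omega <= Rb * \big[Order.max/0]_(i < m) dist_to x (Om i).
Hypothesis theta0_in : forall i, Om i (theta 0%N i).
Hypothesis theta_proj : forall t i, is_proj (Om i) (mix t i - alpha t *: c) (theta t.+1 i).
Hypothesis w_proj : forall t, is_proj Omega (avg t) (w t).

Lemma agents_gt0 : (0 < m)%N.
Proof.
rewrite lt0n; apply/eqP => m0; move: (pi_sum1 0%N).
rewrite big1 => [/eqP|j _]; first by rewrite eq_sym oner_eq0.
by have := ltn_ord j; rewrite {2}m0.
Qed.

Lemma eta_le1 : eta <= 1.
Proof.
pose i0 : 'I_m := Ordinal agents_gt0.
apply: le_trans (pi_ge_eta 0%N i0) _; rewrite -(pi_sum1 0%N) (bigD1 i0) //= lerDl.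
by apply: sumr_ge0 => j _; exact: pi_ge0.
Qed.

Lemma theta_in t i : Om i (theta t i).
Proof. by case: t => [|t]; [exact: theta0_in | exact: (theta_proj t i).1]. Qed.

Lemma beta_ge0 t : 0 <= beta t.
Proof. by apply: sumr_ge0 => i _; exact: enorm_ge0. Qed.

Lemma dev_bound_ge0 t : 0 <= dev_bound t.
Proof.
have lam_ge0 := ltW lam_gt0; have alpha_ge0 r := ltW (alpha_gt0 r).
have theta0_ge0 : 0 <= \sum_(j < m) enorm (theta 0%N j).
  by apply: sumr_ge0 => j _; exact: enorm_ge0.
rewrite /dev_bound !addr_ge0 ?mulr_ge0 ?exprn_ge0 ?enorm_ge0 ?(ltW B_gt0) //.
  exact: disc_sum_ge0 lam_ge0 beta_ge0.
exact: disc_sum_ge0 lam_ge0 alpha_ge0.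
Qed.

Lemma theta_deviation_le t i : enorm (theta t i - avg t) <= dev_bound t.
Proof.
(* Stacking the iterates as rows turns the DPG update into X(s+1) = A(s) X(s) + U(s). *)
pose X s := \matrix_(j < m) theta s j.
pose U s := \matrix_(j < m) (phi s j - alpha s *: c).
have rowX s k : row k (X s) = theta s k by rewrite rowK.
have rowU s k : row k (U s) = phi s k - alpha s *: c by rewrite rowK.
have X_rec s : X s.+1 = A s *m X s + U s.
  apply/row_matrixP => j; rewrite raddfD /= row_mul mulmx_sum_row rowX rowU /phi.
  under eq_bigr do rewrite rowX mxE.
  rewrite -/(mix s j) opprB -addrA (addrAC (alpha s *: c)) subrr add0r.
  by rewrite addrCA subrr addr0.
have avgE : avg t = pi t *m X t.
  by rewrite mulmx_sum_row; apply: eq_bigr => j _; rewrite rowX.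
rewrite -(rowX t i) avgE; apply: le_trans (state_deviation_le pi_inv X_rec mixing t i) _.
rewrite /dev_bound -addrA; under eq_bigr do rewrite rowX.
rewrite lerD2l.
have -> : B * disc_sum lam beta t + m%:R * B * C * disc_sum lam alpha t =
    \sum_(0 <= r < t) B * lam ^+ (t - r - 1) * (beta r + m%:R * (alpha r * C)).
  by rewrite /disc_sum !mulr_sumr -big_split; apply: eq_bigr => r _ /=; ring.
apply: ler_sum_nat => r _; apply: ler_wpM2l; first by rewrite mulr_ge0 ?exprn_ge0 ?ltW.
have -> : m%:R * (alpha r * C) = \sum_(j < m) alpha r * C.
  by rewrite sumr_const card_ord mulr_natl.
rewrite /beta -big_split /=; apply: ler_sum => j _; rewrite rowU.
by apply: le_trans (enormD _ _) _; rewrite enormN enormZ gtr0_norm.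
Qed.

Lemma avg_dist_le t : enorm (avg t - w t) <= Rb * dev_bound t.
Proof.
have hull : conv_hull (\bigcup_i Om i) (avg t).
  exists m, (fun j => pi t ord0 j), (theta t); do 2!split => //.
  by split=> // j; exists j => //; exact: theta_in.
apply: le_trans (is_proj_enorm_le_dist (w_proj t)) _.
apply: le_trans (regular hull) _; rewrite ler_wpM2l //.
apply: bigmax_le => [|i _]; first exact: dev_bound_ge0.
apply: le_trans (dist_to_le_enorm _ (theta_in t i)) _.
by rewrite enormBC theta_deviation_le.
Qed.

Lemma dotp_avg_le v t : - dotp c (avg t - v) <= - dotp c (w t - v) + C * Rb * dev_bound t.
Proof.
have -> : avg t - v = (w t - v) + (avg t - w t) by rewrite [RHS]addrC addrA subrK.
rewrite dotpDr opprD lerD2l -dotpNr -mulrA.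
apply: le_trans (dotp_le_enorm _ _) _; rewrite enormN ler_wpM2l ?enorm_ge0 //.
exact: avg_dist_le.
Qed.

Lemma mix_subr v t i : mix t i - v = \sum_j A t i j *: (theta t j - v).
Proof.
under eq_bigr do rewrite scalerBr.
by rewrite sumrB -scaler_suml (stochA t).2 scale1r.
Qed.

Lemma agent_sqdist_le v t i : Omega v ->
  enorm (theta t.+1 i - v) ^+ 2 <= \sum_j A t i j * enorm (theta t j - v) ^+ 2
    - 2 * alpha t * dotp c (mix t i - v) + alpha t ^+ 2 * C ^+ 2 - enorm (phi t i) ^+ 2.
Proof.
move=> Omv; have proj := is_proj_enorm_sqr (@convOm i) (theta_proj t i) (Omv i).
have jensen : enorm (mix t i - v) ^+ 2 <= \sum_j A t i j * enorm (theta t j - v) ^+ 2.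
  by rewrite mix_subr; apply: enorm_convex_sqr; [exact: (stochA t).1 i | exact: (stochA t).2 i].
have expand : enorm (mix t i - alpha t *: c - v) ^+ 2 =
    enorm (mix t i - v) ^+ 2 - 2 * alpha t * dotp c (mix t i - v) + alpha t ^+ 2 * C ^+ 2.
  rewrite addrAC enormB_sq dotpZr enormZ gtr0_norm // exprMn (dotpC (mix t i - v)).
  by ring.
by rewrite expand in proj; apply: le_trans proj _; rewrite !lerD2r.
Qed.

Lemma pi_succ_mix t : \sum_i pi t.+1 ord0 i *: mix t i = avg t.
Proof.
rewrite /avg (pi_inv t); under eq_bigr do rewrite scaler_sumr.
rewrite exchange_big /=; apply: eq_bigr => j _.
by rewrite mxE scaler_suml; apply: eq_bigr => i _; rewrite scalerA.
Qed.

Lemma weighted_sqdist_le v t : Omega v ->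
  \sum_i pi t.+1 ord0 i * enorm (theta t.+1 i - v) ^+ 2 <=
  \sum_i pi t ord0 i * enorm (theta t i - v) ^+ 2 - 2 * alpha t * dotp c (avg t - v)
  + alpha t ^+ 2 * C ^+ 2 - eta * \sum_i enorm (phi t i) ^+ 2.
Proof.
move=> Omv.
apply: le_trans (_ : \sum_i pi t.+1 ord0 i * (\sum_j A t i j * enorm (theta t j - v) ^+ 2
    - 2 * alpha t * dotp c (mix t i - v) + alpha t ^+ 2 * C ^+ 2
    - enorm (phi t i) ^+ 2) <= _).
  by apply: ler_sum => i _; apply: ler_wpM2l => //; exact: agent_sqdist_le.
rewrite (eq_bigr (fun i => pi t.+1 ord0 i * \sum_j A t i j * enorm (theta t j - v) ^+ 2
    - 2 * alpha t * (pi t.+1 ord0 i * dotp c (mix t i - v))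
    + pi t.+1 ord0 i * (alpha t ^+ 2 * C ^+ 2)
    - pi t.+1 ord0 i * enorm (phi t i) ^+ 2)); last by move=> i _; ring.
rewrite sumrB big_split sumrB /= -mulr_sumr -mulr_suml pi_sum1 mul1r.
have -> : \sum_i pi t.+1 ord0 i * \sum_j A t i j * enorm (theta t j - v) ^+ 2 =
    \sum_j pi t ord0 j * enorm (theta t j - v) ^+ 2.
  under eq_bigr do rewrite mulr_sumr; rewrite exchange_big /=.
  apply: eq_bigr => j _; rewrite (pi_inv t) mxE mulr_suml.
  by apply: eq_bigr => i _; rewrite mulrA.
have -> : \sum_i pi t.+1 ord0 i * dotp c (mix t i - v) = dotp c (avg t - v).
  rewrite -dotp_sumZr; congr (dotp c _); under eq_bigr do rewrite scalerBr.
  by rewrite sumrB pi_succ_mix -scaler_suml pi_sum1 scale1r.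
have : eta * \sum_i enorm (phi t i) ^+ 2 <= \sum_i pi t.+1 ord0 i * enorm (phi t i) ^+ 2.
  by rewrite mulr_sumr; apply: ler_sum => i _; rewrite ler_wpM2r ?sqr_ge0.
lra.
Qed.

Lemma psi_succ_le t : alpha t.+1 * disc_sum lam beta t.+1 <=
  alpha t * (lam * disc_sum lam beta t + beta t).
Proof.
rewrite disc_sumS; apply: ler_wpM2r; last exact: alpha_noninc.
have lam_ge0 := ltW lam_gt0.
by rewrite addr_ge0 ?beta_ge0 ?mulr_ge0 ?(disc_sum_ge0 _ lam_ge0 beta_ge0).
Qed.

Lemma beta_sqr_le t : eta / m%:R * beta t ^+ 2 <= eta * \sum_i enorm (phi t i) ^+ 2.
Proof.
have m_gt0 : 0 < m%:R :> R by rewrite ltr0n agents_gt0.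
apply: le_trans (_ : eta / m%:R * (m%:R * \sum_i enorm (phi t i) ^+ 2) <= _).
  by apply: ler_wpM2l; [rewrite divr_ge0 ?ltW | exact: sqr_sum_le].
by rewrite mulrA divfK ?gt_eqF.
Qed.

Lemma dpg_lyapunov_step :
  let D3 := 2 * C * (1 + Rb / eta) in
  let b := Num.sqrt (eta / m%:R) in
  let a := D3 * B / ((1 - lam) * b) in
  forall v t, Omega v ->
  \sum_(i < m) pi t.+1 ord0 i * enorm (theta t.+1 i - v) ^+ 2
    + a * b * (alpha t.+1 * disc_sum lam beta t.+1)
  <= \sum_(i < m) pi t ord0 i * enorm (theta t i - v) ^+ 2
     + a * b * (alpha t * disc_sum lam beta t)
     - 2 * alpha t * dotp c (w t - v) + (C ^+ 2 + a ^+ 2 / 2) * alpha t ^+ 2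
     - eta / 2 * \sum_(i < m) enorm (phi t i) ^+ 2
     + B * (\sum_(j < m) enorm (theta 0%N j)) * D3 * alpha t * lam ^+ t
     + m%:R * B * C * D3 * alpha t * disc_sum lam alpha t.
Proof.
move=> D3 b a v t Omv; have alpha_t_gt0 := alpha_gt0 t.
have D3_ge0 : 0 <= D3.
  by rewrite /D3 !mulr_ge0 ?enorm_ge0 ?addr_ge0 ?divr_ge0 ?(ltW eta_gt0).
have b_gt0 : 0 < b by rewrite sqrtr_gt0 divr_gt0 ?ltr0n ?agents_gt0.
have ab_ge0 : 0 <= a * b.
  apply: mulr_ge0 (ltW b_gt0); apply: divr_ge0; first exact: mulr_ge0 D3_ge0 (ltW B_gt0).
  by rewrite mulr_ge0 ?(ltW b_gt0) // subr_ge0 ltW.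
(* The choice of a: this identity lets the potential ab psi absorb the beta-part of the
   consensus error, leaving only ab alpha beta for AM-GM. *)
have ab_eq : a * b * (1 - lam) = D3 * B.
  by rewrite /a; field; rewrite !gt_eqF // subr_gt0.
have D3_ge : 2 * C * Rb <= D3.
  apply: ler_wpM2l; first by rewrite mulr_ge0 ?enorm_ge0.
  apply: ler_wpDl => //; rewrite ler_pdivlMr // -[leRHS]mulr1.
  exact: (ler_wpM2l Rb_ge0 eta_le1).
have sqdist := weighted_sqdist_le t Omv.
have avg_term : 2 * alpha t * (- dotp c (avg t - v)) <=
    2 * alpha t * (- dotp c (w t - v) + C * Rb * dev_bound t).
  by apply: ler_wpM2l; [rewrite mulr_ge0 ?ltW | exact: dotp_avg_le].
have dev_term : alpha t * dev_bound t * (2 * C * Rb) <= alpha t * dev_bound t * D3.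
  by apply: ler_wpM2l => //; exact: mulr_ge0 (ltW alpha_t_gt0) (dev_bound_ge0 t).
have dev_split : alpha t * dev_bound t * D3 = B * (\sum_(j < m) enorm (theta 0%N j)) * D3
    * alpha t * lam ^+ t + D3 * B * (alpha t * disc_sum lam beta t)
    + m%:R * B * C * D3 * alpha t * disc_sum lam alpha t.
  by rewrite /dev_bound; ring.
have psi_le := ler_wpM2l ab_ge0 (psi_succ_le t).
have psi_split : a * b * (alpha t * (lam * disc_sum lam beta t + beta t)) =
    a * b * (alpha t * disc_sum lam beta t) - D3 * B * (alpha t * disc_sum lam beta t)
    + a * b * alpha t * beta t.
  by rewrite -ab_eq; ring.
have amgm : a * b * alpha t * beta t <= a ^+ 2 / 2 * alpha t ^+ 2 + b ^+ 2 * beta t ^+ 2 / 2.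
  by have := sqr_ge0 (a * alpha t - b * beta t); lra.
have := beta_sqr_le t; rewrite -(sqr_sqrtr (divr_ge0 (ltW eta_gt0) (ler0n _ m))) -/b.
lra.
Qed.

End DPG.

Theorem proposition8 (R : realType) (m p : nat)
  (A : nat -> 'M[R]_m) (Om : 'I_m -> set 'rV[R]_p) (c : 'rV[R]_p)
  (alpha : nat -> R) (pi : nat -> 'rV[R]_m)
  (B lam eta Rb : R)
  (theta : nat -> 'I_m -> 'rV[R]_p) (w : nat -> 'rV[R]_p) :
  (forall t, row_stochastic (A t)) ->
  (forall i, Om i !=set0) -> (forall i, closed (Om i)) -> (forall i, convex_set (Om i)) ->
  [set x | forall i, Om i x] !=set0 ->
  (forall t, 0 < alpha t) ->
  (forall t j, 0 <= pi t ord0 j) -> (forall t, \sum_(j < m) pi t ord0 j = 1) ->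
  (forall t, pi t = pi t.+1 *m A t) ->
  0 < B -> 0 < lam -> lam < 1 ->
  (forall s t i j, (t <= s)%N -> `|Atrans A s t i j - pi t ord0 j| <= B * lam ^+ (s - t)) ->
  0 < eta -> (forall t i, eta <= pi t ord0 i) ->
  1 <= Rb ->
  (forall x, conv_hull (\bigcup_i Om i) x ->
     dist_to x [set y | forall i, Om i y] <= Rb * \big[Order.max/0]_(i < m) dist_to x (Om i)) ->
  (forall i, Om i (theta 0%N i)) ->
  (forall t, alpha t.+1 <= alpha t) ->
  (forall t i, is_proj (Om i)
     (\sum_(j < m) A t i j *: theta t j - alpha t *: c) (theta t.+1 i)) ->
  (forall t, is_proj [set x | forall i, Om i x]
     (\sum_(j < m) pi t ord0 j *: theta t j) (w t)) ->
  let phi := fun t i => theta t.+1 i - (\sum_(j < m) A t i j *: theta t j - alpha t *: c) in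
  let beta := fun t => \sum_(i < m) enorm (phi t i) in
  let psi := fun t => alpha t * \sum_(0 <= r < t) lam ^+ (t - r - 1) * beta r in
  let C := enorm c in
  let D1 := B * \sum_(j < m) enorm (theta 0%N j) in
  let D2 := m%:R * B * C in
  let D3 := 2 * C * (1 + Rb / eta) in
  let D4 := eta / 2 in
  let b := Num.sqrt (eta / m%:R) in
  let a := D3 * B / ((1 - lam) * b) in
  let D5 := C ^+ 2 + a ^+ 2 / 2 in
  let D13 := D1 * D3 in
  let D23 := D2 * D3 in
  forall v, (forall i, Om i v) -> forall t : nat,
    \sum_(i < m) pi t.+1 ord0 i * enorm (theta t.+1 i - v) ^+ 2 + a * b * psi t.+1
    <= \sum_(i < m) pi t ord0 i * enorm (theta t i - v) ^+ 2 + a * b * psi t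
       - 2 * alpha t * dotp c (w t - v) + D5 * alpha t ^+ 2
       - D4 * \sum_(i < m) enorm (phi t i) ^+ 2
       + D13 * alpha t * lam ^+ t
       + D23 * alpha t * \sum_(0 <= r < t) lam ^+ (t - r - 1) * alpha r.
Proof.
move=> stochA _ _ convOm _ alpha_gt0 pi_ge0 pi_sum1 pi_inv B_gt0 lam_gt0 lam_lt1 mixing
  eta_gt0 pi_ge_eta Rb_ge1 regular theta0_in alpha_noninc theta_proj w_proj.
have Rb_ge0 : 0 <= Rb := le_trans ler01 Rb_ge1.
move=> phi beta psi C D1 D2 D3 D4 b a D5 D13 D23 v Omv t.
exact: (dpg_lyapunov_step stochA convOm alpha_gt0 alpha_noninc pi_ge0 pi_sum1 pi_inv
  B_gt0 lam_gt0 lam_lt1 mixing eta_gt0 pi_ge_eta Rb_ge0 regular theta0_in theta_proj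
  w_proj t Omv).
Qed.
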